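(* Let $(X,Y,Z,W)$ be a solution of system (S) on $(-\infty,t_{max})$. Assume $Y,W>0$, $\lim_{t\to-\infty}(X,Y,Z,W)(t)=(0,0,1,0)$, and $\mathcal C>0$. Then $dX(t)+Z(t)\le1$ for all $t\in(-\infty,t_{max})$.
   Context: Fix a positive integer $d$ and $q\in\mathbb R$. Put $A_2=d(d+2)$ and $A_3=\tfrac14d(d+2)^2q^2$. System (S) is $$X'=X(dX^2+Z^2-1)+\tfrac{A_2}{d}Y^2-2\tfrac{A_3}{d}W^2,\qquad Y'=Y(dX^2+Z^2-X),$$ $$Z'=Z(dX^2+Z^2-1)+A_3W^2,\qquad W'=W(dX^2+Z^2-2X+Z).$$ $g$ is a positive solution of $g'=gX$ and $\mathcal L=gY$. The first integral is $dX^2+A_2Y^2+Z^2-A_3W^2=1-\mathcal C\mathcal L^2$ with $\mathcal C$ constant; its sign does not depend on the normalization of $g$. *)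

From Stdlib Require Import Reals Lra.
Open Scope R_scope.

(* Time domain (-oo, tmax), where tmax = None encodes tmax = +oo. *)
Definition in_dom (tmax : option R) (t : R) : Prop :=
  match tmax with None => True | Some T => t < T end.

Definition A2 (d : nat) : R := INR d * (INR d + 2).
Definition A3 (d : nat) (q : R) : R := / 4 * INR d * (INR d + 2) ^ 2 * q ^ 2.

Definition solves_S (d : nat) (q : R) (tmax : option R)
    (X Y Z W : R -> R) : Prop :=
  forall t, in_dom tmax t ->
    derivable_pt_lim X t
      (X t * (INR d * X t ^ 2 + Z t ^ 2 - 1)
       + A2 d / INR d * Y t ^ 2 - 2 * (A3 d q / INR d) * W t ^ 2) /\
    derivable_pt_lim Y t (Y t * (INR d * X t ^ 2 + Z t ^ 2 - X t)) /\
    derivable_pt_lim Z t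
      (Z t * (INR d * X t ^ 2 + Z t ^ 2 - 1) + A3 d q * W t ^ 2) /\
    derivable_pt_lim W t
      (W t * (INR d * X t ^ 2 + Z t ^ 2 - 2 * X t + Z t)).

Definition lim_minus_infty (tmax : option R) (f : R -> R) (l : R) : Prop :=
  forall eps, 0 < eps -> exists M, forall t, in_dom tmax t -> t < M ->
    Rabs (f t - l) < eps.

From Stdlib Require Import Reals Lra Psatz.
Open Scope R_scope.

(** Write [F = d X + Z - 1] and [L = g Y].  Since [L' = L (d X^2 + Z^2)], the
    system and the first integral give [(e^t F / L)' = - C e^t L <= 0] and
    [(e^t Z / L)' = e^t A3 W^2 / L >= 0].  Hence for [t <= t1] and [Z t > 1/2],
    [e^t1 F t1 / L t1 <= e^t F t / L t <= 2 |F t| e^t1 Z t1 / L t1], and letting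
    [t -> -oo] (where [F -> 0], [Z -> 1]) shows [F t1 <= 0]. *)

Lemma in_dom_le (tmax : option R) (s t : R) :
  in_dom tmax t -> s <= t -> in_dom tmax s.
Proof. destruct tmax; simpl; lra. Qed.

Lemma lim_minus_infty_plus (tmax : option R) (f h : R -> R) (l m : R) :
  lim_minus_infty tmax f l -> lim_minus_infty tmax h m ->
  lim_minus_infty tmax (fun t => f t + h t) (l + m).
Proof.
  intros Hf Hh eps Heps.
  destruct (Hf (eps / 2)) as [M1 HM1]; [lra|].
  destruct (Hh (eps / 2)) as [M2 HM2]; [lra|].
  exists (Rmin M1 M2); intros t Ht Hlt.
  pose proof (HM1 t Ht (Rlt_le_trans _ _ _ Hlt (Rmin_l M1 M2))).
  pose proof (HM2 t Ht (Rlt_le_trans _ _ _ Hlt (Rmin_r M1 M2))).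
  replace (f t + h t - (l + m)) with ((f t - l) + (h t - m)) by ring.
  pose proof (Rabs_triang (f t - l) (h t - m)); lra.
Qed.

Lemma lim_minus_infty_scal (tmax : option R) (f : R -> R) (c l : R) :
  lim_minus_infty tmax f l -> lim_minus_infty tmax (fun t => c * f t) (c * l).
Proof.
  intros Hf eps Heps.
  destruct (Hf (eps / (Rabs c + 1))) as [M HM].
  { apply Rdiv_lt_0_compat; [lra|]. pose proof (Rabs_pos c); lra. }
  exists M; intros t Ht Hlt.
  specialize (HM t Ht Hlt).
  replace (c * f t - c * l) with (c * (f t - l)) by ring.
  rewrite Rabs_mult.
  pose proof (Rabs_pos c); pose proof (Rabs_pos (f t - l)).
  apply Rmult_lt_compat_r with (r := Rabs c + 1) in HM; [|lra].
  unfold Rdiv in HM; rewrite Rmult_assoc, Rinv_l in HM; nra.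
Qed.

Lemma lim_minus_infty_joint (tmax : option R) (f h : R -> R) (l m e T : R) :
  0 < e -> in_dom tmax T ->
  lim_minus_infty tmax f l -> lim_minus_infty tmax h m ->
  exists t, t <= T /\ Rabs (f t - l) < e /\ Rabs (h t - m) < e.
Proof.
  intros He HT Hf Hh.
  destruct (Hf e He) as [M1 HM1]; destruct (Hh e He) as [M2 HM2].
  set (t := Rmin (Rmin M1 M2) T - 1).
  assert (t < M1 /\ t < M2 /\ t <= T) as (H1 & H2 & H3).
  { pose proof (Rmin_l (Rmin M1 M2) T); pose proof (Rmin_r (Rmin M1 M2) T).
    pose proof (Rmin_l M1 M2); pose proof (Rmin_r M1 M2); unfold t; lra. }
  pose proof (in_dom_le tmax t T HT H3) as Ht.
  exists t; auto.
Qed.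

Lemma le_of_derive_nonneg (f f' : R -> R) (a b : R) : a <= b ->
  (forall c, a <= c <= b -> derivable_pt_lim f c (f' c)) ->
  (forall c, a <= c <= b -> 0 <= f' c) -> f a <= f b.
Proof.
  intros Hab Hd Hs; destruct (Rle_lt_or_eq_dec _ _ Hab) as [Hlt | <-]; [|lra].
  destruct (MVT_cor2 f f' a b Hlt Hd) as (c & Hc & Hcab).
  pose proof (Hs c ltac:(lra)); nra.
Qed.

Lemma le_of_derive_nonpos (f f' : R -> R) (a b : R) : a <= b ->
  (forall c, a <= c <= b -> derivable_pt_lim f c (f' c)) ->
  (forall c, a <= c <= b -> f' c <= 0) -> f b <= f a.
Proof.
  intros Hab Hd Hs.
  enough (- f a <= - f b) by lra.
  apply (le_of_derive_nonneg (fun t => - f t) (fun t => - f' t) a b Hab).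
  - intros c Hc; apply derivable_pt_lim_opp, Hd, Hc.
  - intros c Hc; pose proof (Hs c Hc); lra.
Qed.

Lemma derivable_pt_lim_exp_mul_div (F L : R -> R) (t dF s : R) :
  derivable_pt_lim F t dF -> derivable_pt_lim L t (L t * s) -> L t <> 0 ->
  derivable_pt_lim (fun u => exp u * F u / L u) t (exp t * (F t + dF - F t * s) / L t).
Proof.
  intros HF HL HL0.
  pose proof (derivable_pt_lim_div _ _ t _ _
    (derivable_pt_lim_mult exp F t _ _ (derivable_pt_lim_exp t) HF) HL HL0) as D.
  replace (exp t * (F t + dF - F t * s) / L t) with
    (((exp t * F t + exp t * dF) * L t - L t * s * (exp t * F t)) / (L t)²);
    [exact D | unfold Rsqr; field; exact HL0].
Qed.

Lemma A3_nonneg (d : nat) (q : R) : 0 <= A3 d q.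
Proof.
  unfold A3; pose proof (pos_INR d).
  apply Rmult_le_pos; [apply Rmult_le_pos|]; [nra | apply pow2_ge_0 | apply pow2_ge_0].
Qed.

Lemma le_0_of_le_eps_mul (x c : R) :
  (forall eps, 0 < eps -> x <= eps * c) -> x <= 0.
Proof.
  intros Hx; destruct (Rle_or_lt c 0) as [Hc | Hc].
  - pose proof (Hx 1 Rlt_0_1); lra.
  - destruct (Rle_or_lt x 0) as [|Hpos]; [assumption|].
    pose proof (Hx (x / (2 * c)) ltac:(apply Rdiv_lt_0_compat; lra)) as H.
    replace (x / (2 * c) * c) with (x / 2) in H by (field; lra); lra.
Qed.

Section AsymptoticallyTrivialSolution.

Variables (d : nat) (q : R) (tmax : option R) (X Y Z W g : R -> R) (C : R).

Hypothesis d_pos : (0 < d)%nat.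
Hypothesis solution : solves_S d q tmax X Y Z W.
Hypothesis YW_pos : forall t, in_dom tmax t -> 0 < Y t /\ 0 < W t.
Hypothesis X_lim : lim_minus_infty tmax X 0.
Hypothesis Z_lim : lim_minus_infty tmax Z 1.
Hypothesis g_spec :
  forall t, in_dom tmax t -> 0 < g t /\ derivable_pt_lim g t (g t * X t).
Hypothesis first_integral : forall t, in_dom tmax t ->
  INR d * X t ^ 2 + A2 d * Y t ^ 2 + Z t ^ 2 - A3 d q * W t ^ 2
  = 1 - C * (g t * Y t) ^ 2.
Hypothesis C_nonneg : 0 <= C.

Definition scaled_excess (t : R) : R :=
  exp t * (INR d * X t + Z t - 1) / (g t * Y t).

Definition scaled_Z (t : R) : R := exp t * Z t / (g t * Y t).

Lemma gY_pos (t : R) : in_dom tmax t -> 0 < g t * Y t.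
Proof.
  intros Ht; destruct (g_spec t Ht); destruct (YW_pos t Ht).
  apply Rmult_lt_0_compat; assumption.
Qed.

Lemma gY_deriv (t : R) : in_dom tmax t ->
  derivable_pt_lim (fun u => g u * Y u) t
    (g t * Y t * (INR d * X t ^ 2 + Z t ^ 2)).
Proof.
  intros Ht; destruct (g_spec t Ht) as [_ Dg].
  destruct (solution t Ht) as (_ & DY & _ & _).
  pose proof (derivable_pt_lim_mult g Y t _ _ Dg DY) as D.
  match type of D with derivable_pt_lim _ _ ?v =>
    replace (g t * Y t * (INR d * X t ^ 2 + Z t ^ 2)) with v by ring end.
  exact D.
Qed.

Lemma scaled_excess_deriv (t : R) : in_dom tmax t ->
  derivable_pt_lim scaled_excess t (- C * exp t * (g t * Y t)).
Proof.
  intros Ht; destruct (solution t Ht) as (DX & _ & DZ & _).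
  pose proof (gY_pos t Ht) as HL.
  assert (DF : derivable_pt_lim (fun u => INR d * X u + Z u - 1) t
     (INR d * (X t * (INR d * X t ^ 2 + Z t ^ 2 - 1)
        + A2 d / INR d * Y t ^ 2 - 2 * (A3 d q / INR d) * W t ^ 2)
      + (Z t * (INR d * X t ^ 2 + Z t ^ 2 - 1) + A3 d q * W t ^ 2) - 0)).
  { apply (derivable_pt_lim_minus _ (fun _ => 1)); [|apply derivable_pt_lim_const].
    apply (derivable_pt_lim_plus (fun u => INR d * X u)); [|exact DZ].
    apply (derivable_pt_lim_scal X); exact DX. }
  pose proof (derivable_pt_lim_exp_mul_div _ _ t _ _ DF (gY_deriv t Ht)
    ltac:(lra)) as D; cbv beta in D.
  unfold scaled_excess.
  match type of D with derivable_pt_lim _ _ ?v =>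
    replace (- C * exp t * (g t * Y t)) with v end; [exact D|].
  destruct (g_spec t Ht) as [g_pos _]; destruct (YW_pos t Ht) as [Y_pos _].
  assert (INR d <> 0) by (apply not_0_INR; lia).
  (* [F + F' - F (dX^2 + Z^2)] is the first integral minus one, i.e. [- C L^2]. *)
  replace (- C * exp t * (g t * Y t)) with
    (exp t * (INR d * X t ^ 2 + A2 d * Y t ^ 2 + Z t ^ 2 - A3 d q * W t ^ 2 - 1)
     / (g t * Y t)) by (rewrite first_integral by exact Ht; field; lra).
  field; repeat split; lra.
Qed.

Lemma scaled_Z_deriv (t : R) : in_dom tmax t ->
  derivable_pt_lim scaled_Z t (exp t * (A3 d q * W t ^ 2) / (g t * Y t)).
Proof.
  intros Ht; destruct (solution t Ht) as (_ & _ & DZ & _).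
  pose proof (derivable_pt_lim_exp_mul_div _ _ t _ _ DZ (gY_deriv t Ht)
    ltac:(pose proof (gY_pos t Ht); lra)) as D.
  unfold scaled_Z.
  match type of D with derivable_pt_lim _ _ ?v =>
    replace (exp t * (A3 d q * W t ^ 2) / (g t * Y t)) with v by (f_equal; ring) end.
  exact D.
Qed.

Lemma scaled_excess_noninc (s t : R) : s <= t -> in_dom tmax t ->
  scaled_excess t <= scaled_excess s.
Proof.
  intros Hst Ht.
  apply (le_of_derive_nonpos _ (fun u => - C * exp u * (g u * Y u)) s t Hst).
  - intros c Hc; apply scaled_excess_deriv, (in_dom_le tmax c t Ht); lra.
  - intros c Hc; pose proof (gY_pos c (in_dom_le tmax c t Ht ltac:(lra))).
    pose proof (exp_pos c).
    assert (0 <= C * exp c * (g c * Y c)) by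
      (apply Rmult_le_pos; [apply Rmult_le_pos|]; lra).
    lra.
Qed.

Lemma scaled_Z_nondec (s t : R) : s <= t -> in_dom tmax t ->
  scaled_Z s <= scaled_Z t.
Proof.
  intros Hst Ht.
  apply (le_of_derive_nonneg _
    (fun u => exp u * (A3 d q * W u ^ 2) / (g u * Y u)) s t Hst).
  - intros c Hc; apply scaled_Z_deriv, (in_dom_le tmax c t Ht); lra.
  - intros c Hc; pose proof (gY_pos c (in_dom_le tmax c t Ht ltac:(lra))).
    pose proof (exp_pos c); pose proof (A3_nonneg d q); pose proof (pow2_ge_0 (W c)).
    unfold Rdiv; apply Rmult_le_pos; [|apply Rlt_le, Rinv_0_lt_compat; lra].
    apply Rmult_le_pos; [lra | apply Rmult_le_pos; lra].
Qed.

Lemma scaled_Z_pos (s : R) : in_dom tmax s -> 0 < Z s -> 0 < scaled_Z s.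
Proof.
  intros Hs HZ; pose proof (gY_pos s Hs); pose proof (exp_pos s).
  unfold scaled_Z; apply Rdiv_lt_0_compat; [apply Rmult_lt_0_compat|]; lra.
Qed.

Lemma scaled_excess_le_scaled_Z (s t : R) : s <= t -> in_dom tmax t ->
  / 2 < Z s ->
  scaled_excess s <= 2 * Rabs (INR d * X s + Z s - 1) * scaled_Z t.
Proof.
  intros Hst Ht HZs.
  pose proof (in_dom_le tmax s t Ht Hst) as Hs_dom.
  pose proof (gY_pos s Hs_dom).
  destruct (g_spec s Hs_dom) as [g_pos _]; destruct (YW_pos s Hs_dom) as [Y_pos _].
  set (F := INR d * X s + Z s - 1).
  assert (Hs : scaled_excess s = F / Z s * scaled_Z s)
    by (unfold scaled_excess, scaled_Z, F; field; repeat split; lra).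
  pose proof (scaled_Z_pos s Hs_dom ltac:(lra)).
  pose proof (scaled_Z_nondec s t Hst Ht).
  assert (F / Z s <= 2 * Rabs F).
  { pose proof (Rle_abs F); pose proof (Rabs_pos F).
    apply Rmult_le_reg_r with (Z s); [lra|].
    unfold Rdiv; rewrite Rmult_assoc, Rinv_l by lra; nra. }
  rewrite Hs; pose proof (Rabs_pos F); nra.
Qed.

Lemma scaled_excess_nonpos (t : R) : in_dom tmax t -> scaled_excess t <= 0.
Proof.
  intros Ht.
  apply (le_0_of_le_eps_mul _ (2 * scaled_Z t)); intros eps Heps.
  assert (F_lim : lim_minus_infty tmax (fun u => INR d * X u + Z u) 1).
  { replace 1 with (INR d * 0 + 1) by ring.
    apply lim_minus_infty_plus; [apply lim_minus_infty_scal|]; assumption. }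
  destruct (lim_minus_infty_joint tmax _ Z 1 1 (Rmin eps (/ 2)) t
              ltac:(apply Rmin_glb_lt; lra) Ht F_lim Z_lim) as (s & Hst & HF & HZ).
  pose proof (Rmin_l eps (/ 2)); pose proof (Rmin_r eps (/ 2)).
  pose proof (Rabs_def2 _ _ HZ).
  pose proof (scaled_excess_noninc s t Hst Ht).
  pose proof (scaled_excess_le_scaled_Z s t Hst Ht ltac:(lra)).
  pose proof (scaled_Z_nondec s t Hst Ht).
  pose proof (scaled_Z_pos s (in_dom_le tmax s t Ht Hst) ltac:(lra)).
  nra.
Qed.

Lemma dX_plus_Z_le_1 (t : R) : in_dom tmax t -> INR d * X t + Z t <= 1.
Proof.
  intros Ht; pose proof (scaled_excess_nonpos t Ht) as H.
  pose proof (gY_pos t Ht); pose proof (exp_pos t).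
  destruct (g_spec t Ht) as [g_pos _]; destruct (YW_pos t Ht) as [Y_pos _].
  unfold scaled_excess in H.
  assert (Hpos : 0 < exp t / (g t * Y t)) by (apply Rdiv_lt_0_compat; lra).
  replace (exp t * (INR d * X t + Z t - 1) / (g t * Y t))
    with ((INR d * X t + Z t - 1) * (exp t / (g t * Y t))) in H
    by (field; split; lra).
  nra.
Qed.

End AsymptoticallyTrivialSolution.

Theorem proposition5p2 (d : nat) (q : R) (tmax : option R)
    (X Y Z W g : R -> R) (C : R) :
  (0 < d)%nat ->
  solves_S d q tmax X Y Z W ->
  (forall t, in_dom tmax t -> 0 < Y t /\ 0 < W t) ->
  lim_minus_infty tmax X 0 -> lim_minus_infty tmax Y 0 ->
  lim_minus_infty tmax Z 1 -> lim_minus_infty tmax W 0 ->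
  (forall t, in_dom tmax t -> 0 < g t /\ derivable_pt_lim g t (g t * X t)) ->
  (forall t, in_dom tmax t ->
     INR d * X t ^ 2 + A2 d * Y t ^ 2 + Z t ^ 2 - A3 d q * W t ^ 2
     = 1 - C * (g t * Y t) ^ 2) ->
  0 < C ->
  forall t, in_dom tmax t -> INR d * X t + Z t <= 1.
Proof.
  intros Hd HS HYW HX _ HZ _ Hg HI HC.
  exact (dX_plus_Z_le_1 d q tmax X Y Z W g C Hd HS HYW HX HZ Hg HI (Rlt_le _ _ HC)).
Qed.
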